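(* Let $G$ be a finite simple graph without isolated edges and without isolated triangles. Then the edges of $G$ can be colored with $a(G)$ colors so that each color class induces a forest without isolated edges.
   Context: The arboricity $a(G)$ is the least number of forests into which the edge set of $G$ can be decomposed. An isolated edge of a graph is a connected component isomorphic to $K_2$; an isolated triangle is a connected component isomorphic to $K_3$. A forest induced by a color class has no isolated edges if none of its components consists of a single edge. *)

From mathcomp Require Import all_boot.
Set Implicit Arguments. Unset Strict Implicit. Unset Printing Implicit Defensive.

(* A finite simple graph: vertex type T : finType, adjacency e : rel T,
   symmetric and irreflexive. Edges are 2-element vertex sets. *)

Definition edges (T : finType) (e : rel T) : {set {set T}} :=
  [set [set x; y] | x in T, y in T & e x y].

Definition is_forest (T : finType) (F : {set {set T}}) : Prop :=
  ~ exists s : seq T,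
      [/\ uniq s, 3 <= size s & cycle (fun x y => [set x; y] \in F) s].

Definition isolated_edge_in (T : finType) (F : {set {set T}}) (f : {set T}) :
  Prop := f \in F /\ forall g, g \in F -> g != f -> [disjoint g & f].

Definition no_isolated_edges (T : finType) (F : {set {set T}}) : Prop :=
  forall f, ~ isolated_edge_in F f.

Definition forest_decomposable (T : finType) (e : rel T) (k : nat) : Prop :=
  exists c : {set T} -> 'I_k,
    forall i : 'I_k, is_forest [set f in edges e | c f == i].

Definition is_arboricity (T : finType) (e : rel T) (k : nat) : Prop :=
  forest_decomposable e k /\ forall j, forest_decomposable e j -> k <= j.

Definition has_isolated_edge (T : finType) (e : rel T) : Prop :=
  exists x y, [/\ e x y, (forall v, e x v -> v = y) & (forall v, e y v -> v = x)].

Definition has_isolated_triangle (T : finType) (e : rel T) : Prop :=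
  exists x y z, [/\ e x y, e y z, e x z &
    forall u v, e u v -> u \in [set x; y; z] -> v \in [set x; y; z]].

From mathcomp Require Import all_boot.
From Stdlib Require Import Classical.
Set Implicit Arguments. Unset Strict Implicit. Unset Printing Implicit Defensive.

(* Among all decompositions of E(G) into k forests (only the existence of one
   is used, not the minimality of k), take a colouring c minimising the number
   of edges isolated in their own colour class, and let uv be such an edge, of
   colour i.  If u or v meets a colour j <> i, recolouring uv with j lowers the
   count, so it must close a j-cycle: u and v are joined by a j-path u w ... v.
   Recolouring uw with i keeps all classes acyclic, so it must create a new
   isolated edge of colour j next to uw; this forces the j-component of u and v
   to be the cherry u - w - v.  Exchanging the colours of uv and uw shows that
   w meets no i-edge and yields another minimal colouring in which uw is
   isolated.  Comparing the cherries of a third colour in both colourings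
   shows that no third colour meets u, v or w, so u v w is an isolated
   triangle unless u and v have no other neighbours, i.e. uv is an isolated
   edge of G. *)

Lemma eq_set2 (T : finType) (x y u v : T) :
  ([set x; y] == [set u; v]) = ((x == u) && (y == v)) || ((x == v) && (y == u)).
Proof.
apply/eqP/idP => [E|/orP[]/andP[/eqP-> /eqP->] //]; last exact: setUC.
have /set2P[|] : x \in [set u; v] by rewrite -E set21.
all: have /set2P[|] : y \in [set u; v] by rewrite -E set22.
all: move=> ? ?; subst; rewrite !eqxx ?orbT ?andbT //= orbb.
- by have := set22 u v; rewrite -E !inE orbb eq_sym.
- by have := set21 u v; rewrite -E !inE orbb eq_sym.
Qed.

Lemma eq_set2l (T : finType) (x y z : T) : y != x -> ([set x; y] == [set x; z]) = (y == z).
Proof. by move=> yx; rewrite eq_set2 eqxx (negbTE yx) andbF orbF. Qed.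

Lemma meets_set2 (T : finType) (x y : T) (A : {set T}) :
  ~~ [disjoint [set x; y] & A] = (x \in A) || (y \in A).
Proof. by rewrite disjoints_subset subUset !sub1set !inE negb_and !negbK. Qed.

Lemma card_le_setD1 (T : finType) (A B : {set T}) x y :
  A :\ x \subset B :\ y -> y \in B -> #|A| <= #|B|.
Proof.
move=> sub yB; rewrite (cardsD1 x A) (cardsD1 y B) yB.
by apply: leq_add; [case: (x \in A) | apply: subset_leq_card].
Qed.

Lemma exists_minimizer (A : Type) (P : A -> Prop) (f : A -> nat) :
  (exists a, P a) -> exists a, P a /\ forall b, P b -> f a <= f b.
Proof.
case=> a Pa; have [n le_fa_n] : exists n, f a <= n by exists (f a).
elim: n a Pa le_fa_n => [|n IH] a Pa le_fa_n.
  by exists a; split=> // b _; apply: leq_trans le_fa_n _.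
have [[b [Pb lt_ba]]|no_b] := classic (exists b, P b /\ f b < f a).
  by apply: (IH b Pb); rewrite -ltnS (leq_trans lt_ba le_fa_n).
exists a; split=> // b Pb; rewrite leqNgt; apply/negP => lt_ba.
by apply: no_b; exists b.
Qed.

Section Acyclic.
Variable T : finType.
Implicit Types (r : rel T) (s : seq T).

Definition acyclic r := ~ exists s, [/\ uniq s, 3 <= size s & cycle r s].

Lemma sub_acyclic r r' : subrel r' r -> acyclic r -> acyclic r'.
Proof.
by move=> sub acyc [s [us ss cs]]; apply: acyc; exists s; split; last exact: sub_cycle cs.
Qed.

Lemma cycle_nbrs r s x : uniq s -> 3 <= size s -> cycle r s -> x \in s ->
  exists y z, [/\ y \in s, z \in s, y != z, r x y & r z x].
Proof.
move=> us ss cs /rot_index; set t := _ ++ _ => sE.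
have : [/\ uniq (x :: t), 3 <= size (x :: t) & cycle r (x :: t)].
  by rewrite -sE rot_uniq size_rot rot_cycle.
have mem_t y : y \in x :: t -> y \in s by rewrite -sE mem_rot.
case: t sE mem_t => [|y [|z t]] _ mem_t [] //= /and4P[_ y_zt _ _] _.
case/and3P=> rxy _; rewrite rcons_path => /andP[_ rlast].
exists y, (last z t); split => //.
- by apply: mem_t; rewrite !inE eqxx orbT.
- by apply: mem_t; rewrite 2!in_cons mem_last !orbT.
- by apply: contraNneq y_zt => ->; apply: mem_last.
Qed.

Lemma notin_cycle r s x : symmetric r -> (forall y z, r x y -> r x z -> y = z) ->
  uniq s -> 3 <= size s -> cycle r s -> x \notin s.
Proof.
move=> sym_r uniq_nb us ss cs; apply/negP => xs.
have [y [z [_ _ /eqP yz rxy rzx]]] := cycle_nbrs us ss cs xs.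
by apply: yz (uniq_nb _ _ rxy _); rewrite sym_r.
Qed.

Lemma acyclic_off r r' a : acyclic r ->
  (forall x y, x != a -> y != a -> r' x y -> r x y) ->
  (forall s, uniq s -> 3 <= size s -> cycle r' s -> a \notin s) -> acyclic r'.
Proof.
move=> acyc off a_off [s [us ss cs]]; apply: acyc; exists s; split => //.
have a_s := a_off s us ss cs.
apply: (sub_in_cycle (P := predC1 a)) cs; first by move=> x y; apply: off.
by apply/allP => x xs; apply: contraNneq a_s => <-.
Qed.

Section AddEdge.
Variables (r r' : rel T) (u v : T).
Hypothesis r'_sub : forall x y, r' x y -> r x y || ([set x; y] == [set u; v]).

Let r'_off x y : x != u -> y != u -> r' x y -> r x y.
Proof.
move=> xu yu /r'_sub/orP[] //.
by rewrite eq_set2 (negbTE xu) (negbTE yu) andbF.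
Qed.

Lemma path_avoid_edge w t : u \notin w :: t -> w != v ->
  path r' u (w :: t) -> path r u (w :: t).
Proof.
move=> u_wt wv /= /andP[r'uw pt]; apply/andP; split.
  have uw : u != w by apply: contraNneq u_wt => ->; apply: mem_head.
  case/orP: (r'_sub r'uw) => //.
  by rewrite eq_set2 eqxx (negbTE wv) [w == u]eq_sym (negbTE uw) !andbF.
apply: (sub_in_path (P := predC1 u)) pt; first exact: r'_off.
by apply/allP => x xt; apply: contraNneq u_wt => <-.
Qed.

Lemma closing_edge_path t : uniq (u :: t) -> 3 <= size (u :: t) ->
  cycle r' (u :: t) -> last u t = v ->
  exists w p t', [/\ uniq [:: u, w, p & t'], path r u [:: w, p & t'] & last p t' = v].
Proof.
move=> ut st; rewrite /cycle rcons_path => /andP[pt _] lt.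
case: t ut st pt lt => [|w [|p t]] // ut _ pt lt.
exists w, p, t; split => //; apply: path_avoid_edge => //; first by case/andP: ut.
by case/and3P: ut => _ w_pt _; apply: contraNneq w_pt => ->; rewrite -lt /= mem_last.
Qed.

Lemma acyclic_add_edge : symmetric r' -> acyclic r -> ~ acyclic r' ->
  exists w p t, [/\ uniq [:: u, w, p & t], path r u [:: w, p & t] & last p t = v].
Proof.
move=> sym_r' acyc /NNPP[s [us ss cs]].
have u_s : u \in s.
  apply: contraT => u_s; case: acyc; exists s; split => //.
  apply: (sub_in_cycle (P := predC1 u)) cs; first exact: r'_off.
  by apply/allP => x xs; apply: contraNneq u_s => <-.
have /rot_index := u_s; set t := _ ++ _ => sE.
have [ut st ct] : [/\ uniq (u :: t), 3 <= size (u :: t) & cycle r' (u :: t)].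
  by rewrite -sE rot_uniq size_rot rot_cycle.
have [|lt] := eqVneq (last u t) v; first exact: closing_edge_path.
case: t ut st ct lt {sE} => [|w t] // ut st ct lt.
have [wv|wv] := eqVneq w v.
  apply: (closing_edge_path (t := rev (w :: t))).
  - by rewrite /= mem_rev rev_uniq.
  - by rewrite /= size_rev.
  - rewrite -(rot_cycle 1) rot1_cons -rev_cons rev_cycle.
    by rewrite (@eq_cycle _ _ r') // => x y; apply: sym_r'.
  - by rewrite rev_cons last_rcons.
have u_wt : u \notin w :: t by case/andP: ut.
case: acyc; exists (u :: w :: t); split => //.
move: ct; rewrite /cycle !rcons_path => /andP[pt r'last]; apply/andP; split.
  exact: path_avoid_edge.
case/orP: (r'_sub r'last) => //; rewrite eq_set2 (negbTE lt) /= orbF.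
have /negbTE-> // : last u (w :: t) != u.
by apply: contraNneq u_wt => <-; rewrite /= mem_last.
Qed.

End AddEdge.
End Acyclic.

Section Colourings.
Variables (T : finType) (e : rel T).
Hypotheses (e_sym : symmetric e) (e_irr : irreflexive e).

Lemma e_neq x y : e x y -> x != y.
Proof. by apply: contraTneq => ->; rewrite e_irr. Qed.

Lemma mem_edges x y : ([set x; y] \in edges e) = e x y.
Proof.
apply/imset2P/idP => [[a b _]|exy]; last by exists x y; rewrite ?inE.
rewrite inE => eab /eqP; rewrite eq_set2 => /orP[]/andP[/eqP-> /eqP->] //.
by rewrite e_sym.
Qed.

Lemma edgesP f : f \in edges e -> exists x y, e x y /\ f = [set x; y].
Proof. by case/imset2P=> x y _; rewrite inE => exy ->; exists x, y. Qed.

Lemma edge_meets f (A : {set T}) : f \in edges e -> ~~ [disjoint f & A] ->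
  exists2 x, x \in A & exists2 y, e x y & f = [set x; y].
Proof.
case/edgesP=> x [y [exy ->]]; rewrite meets_set2 => /orP[xA|yA].
  by exists x => //; exists y.
by exists y => //; exists x; rewrite 1?e_sym // setUC.
Qed.

Variable k : nat.
Implicit Types (c : {set T} -> 'I_k) (i j l : 'I_k) (f g h : {set T}).

Definition nb c j x y := e x y && (c [set x; y] == j).

Lemma nbC c j : symmetric (nb c j).
Proof. by move=> x y; rewrite /nb e_sym setUC. Qed.

Lemma nb_neq c j x y : nb c j x y -> x != y.
Proof. by case/andP=> /e_neq. Qed.

Definition forest c := forall j, acyclic (nb c j).

Lemma is_forest_class c j : is_forest [set f in edges e | c f == j] <-> acyclic (nb c j).
Proof. by split; apply: sub_acyclic => x y; rewrite inE mem_edges. Qed.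

Definition isolated_edges c := [set f in edges e |
  [forall g in edges e, (c g == c f) && ~~ [disjoint g & f] ==> (g == f)]].

Lemma isolatedP c f : reflect (f \in edges e /\
    forall g, g \in edges e -> c g = c f -> ~~ [disjoint g & f] -> g = f)
  (f \in isolated_edges c).
Proof.
rewrite inE; apply: (iffP andP) => -[fE iso_f]; split => //.
  move=> g gE cg mg; apply/eqP.
  by move/forall_inP: iso_f => /(_ g gE); rewrite cg eqxx mg.
apply/forall_inP => g gE; apply/implyP => /andP[/eqP cg mg].
by apply/eqP/iso_f.
Qed.

Lemma isolated_nb c x y z : [set x; y] \in isolated_edges c ->
  nb c (c [set x; y]) x z -> z = y.
Proof.
case/isolatedP; rewrite mem_edges => /e_neq/negbTE xy iso_xy /andP[exz /eqP cxz].
have := iso_xy [set x; z]; rewrite mem_edges meets_set2 set21 => /(_ exz cxz isT)/eqP.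
by rewrite eq_set2 eqxx xy /= orbF => /eqP.
Qed.

Lemma isolated_nbr c x y z : [set x; y] \in isolated_edges c ->
  nb c (c [set x; y]) y z -> z = x.
Proof. by rewrite setUC; apply: isolated_nb. Qed.

Definition recolor c f j : {set T} -> 'I_k := fun g => if g == f then j else c g.

Lemma recolor_sub c f j l : l != j -> subrel (nb (recolor c f j) l) (nb c l).
Proof.
move=> lj x y; rewrite /nb /recolor; case: ifP => // _ /andP[_ /eqP jl].
by rewrite jl eqxx in lj.
Qed.

Lemma nb_recolor_off c x y j l a b : a != x -> b != x ->
  nb (recolor c [set x; y] j) l a b = nb c l a b.
Proof. by move=> ax bx; rewrite /nb /recolor eq_set2 (negbTE ax) (negbTE bx) andbF. Qed.

Definition minimal c := forest c /\
  forall c', forest c' -> #|isolated_edges c| <= #|isolated_edges c'|.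

Lemma card_isolated_recolor c f j : f \in isolated_edges c -> j != c f ->
  (exists2 g, g \in edges e & c g = j /\ ~~ [disjoint g & f]) ->
  #|isolated_edges (recolor c f j)| < #|isolated_edges c|.
Proof.
move=> iso_f jf [g0 g0E [cg0 mg0]]; have /isolatedP[_ iso_fc] := iso_f.
apply/proper_card/(sub_proper_trans _ (properD1 iso_f)).
apply/subsetP => h /isolatedP[hE iso_h].
have g0f : g0 != f by apply: contraNneq jf => <-; rewrite cg0.
have hf : h != f.
  apply/eqP => hf; subst h.
  have g0_eq : g0 = f by apply: iso_h; rewrite // /recolor eqxx (negbTE g0f).
  by rewrite g0_eq eqxx in g0f.
rewrite in_setD1 hf; apply/isolatedP; split => // g gE cg mg.
have [gf|gf] := eqVneq g f.
  by subst g; rewrite (iso_fc h hE) // disjoint_sym.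
by apply: iso_h; rewrite // /recolor (negbTE gf) (negbTE hf).
Qed.

Definition pendant c j x y := nb c j x y /\ forall z, nb c j y z -> z = x.

Definition fork c j x y := exists2 z, z != y &
  pendant c j x z /\ forall t, nb c j x t -> t = y \/ t = z.

Definition cherry c j w x y := [/\ pendant c j w x, pendant c j w y &
  forall t, nb c j w t -> t = x \/ t = y].

Lemma forest_recolor_isolated c a b w : forest c -> [set a; b] \in isolated_edges c ->
  forest (recolor c [set a; w] (c [set a; b])).
Proof.
move=> fc iso_ab l; set i := c [set a; b]; set c2 := recolor _ _ _.
have [->|li] := eqVneq l i; last exact: sub_acyclic (recolor_sub li) (fc l).
have nb_a t : nb c2 i a t -> t = w \/ t = b.
  move=> /[dup] /nb_neq at_; rewrite /nb /c2 /recolor eq_set2l; last by rewrite eq_sym.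
  by case: ifP => [/eqP-> _ | _ at']; [left | right; exact: isolated_nb iso_ab at'].
have nb_b t : nb c2 i b t -> t = a.
  have ba : b != a by rewrite eq_sym; case/isolatedP: iso_ab; rewrite mem_edges => /e_neq.
  rewrite /nb /c2 /recolor eq_set2 (negbTE ba) /=.
  by case: ifP => [/andP[_ /eqP] // | _ bt]; apply: (isolated_nbr iso_ab).
apply: (acyclic_off (a := a) (fc i)) => [x y xa ya|s us ss cs].
  by rewrite /c2 nb_recolor_off.
apply/negP => a_s.
have b_s : b \notin s by apply: (notin_cycle (nbC c2 i)) us ss cs => y z /nb_b-> /nb_b->.
have [y [z [ys zs yz ay za]]] := cycle_nbrs us ss cs a_s.
rewrite nbC in za.
have [yw|yb] := nb_a _ ay; last by rewrite -yb ys in b_s.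
have [zw|zb] := nb_a _ za; last by rewrite -zb zs in b_s.
by rewrite yw zw eqxx in yz.
Qed.

Lemma isolated_recolor_fork c j l x y z : l != j -> nb c j x y -> nb c j x z -> z != y ->
  [set x; z] \in isolated_edges (recolor c [set x; y] l) -> fork c j x y.
Proof.
move=> lj xy xz zy iso_xz; set c2 := recolor _ _ _ in iso_xz.
have zx : z != x by rewrite eq_sym (nb_neq xz).
have c2xz : c2 [set x; z] = j.
  by rewrite /c2 /recolor eq_set2l // (negbTE zy); case/andP: xz => _ /eqP.
exists z => //; split; [split => // t zt | move=> t xt].
  apply: (isolated_nbr iso_xz); rewrite c2xz /nb /c2 /recolor.
  by rewrite eq_set2 (negbTE zx) (negbTE zy).
have [->|ty] := eqVneq t y; [by left | right].
apply: (isolated_nb iso_xz); rewrite c2xz /nb /c2 /recolor eq_set2l ?(negbTE ty) //.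
by rewrite eq_sym (nb_neq xt).
Qed.

Lemma card_isolated_recolor_fork c a b w j : [set a; b] \in isolated_edges c ->
  j != c [set a; b] -> nb c j a w -> ~ fork c j a w -> ~ fork c j w a ->
  #|isolated_edges (recolor c [set a; w] (c [set a; b]))| < #|isolated_edges c|.
Proof.
move=> iso_ab ji aw no_fork_aw no_fork_wa.
set i := c [set a; b] in ji *; set c2 := recolor _ _ _.
have /andP[eaw /eqP caw] := aw.
have abE : [set a; b] \in edges e by case/isolatedP: iso_ab.
have ab_aw : [set a; b] != [set a; w] by apply: contraNneq ji => abw; rewrite /i abw caw.
have c2aw : c2 [set a; w] = i by rewrite /c2 /recolor eqxx.
have c2ab : c2 [set a; b] = i by rewrite /c2 /recolor (negbTE ab_aw).
have meet_ab_aw : ~~ [disjoint [set a; b] & [set a; w]] by rewrite meets_set2 set21.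
apply/proper_card/(sub_proper_trans _ (properD1 iso_ab)).
apply/subsetP => h /[dup] iso_h2 /isolatedP[hE iso_h].
have h_ab : h != [set a; b].
  apply: contraNneq ab_aw => hab; subst h; apply/eqP/esym/iso_h.
  - by rewrite mem_edges.
  - by rewrite c2aw c2ab.
  - by rewrite disjoint_sym.
have h_aw : h != [set a; w].
  by apply: contraNneq ab_aw => haw; subst h; apply/eqP/iso_h; rewrite ?c2aw ?c2ab.
rewrite in_setD1 h_ab; apply/isolatedP; split => // g gE cg mg.
have c2h : c2 h = c h by rewrite /c2 /recolor (negbTE h_aw).
have [gaw|g_aw] := eqVneq g [set a; w]; last first.
  by apply: iso_h; rewrite // c2h /c2 /recolor (negbTE g_aw).
exfalso; subst g; rewrite disjoint_sym in mg; rewrite caw in cg.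
have [x /set2P[]-> [z exz hxz]] := edge_meets hE mg; subst h.
- apply: no_fork_aw; apply: (isolated_recolor_fork (l := i)) iso_h2.
  + by rewrite eq_sym.
  + exact: aw.
  + by rewrite /nb exz -cg eqxx.
  + by apply: contraNneq h_aw => ->.
- apply: no_fork_wa; apply: (isolated_recolor_fork (l := i) (z := z)).
  + by rewrite eq_sym.
  + by rewrite nbC.
  + by rewrite /nb exz -cg eqxx.
  + by apply: contraNneq h_aw => ->; rewrite setUC eqxx.
  + by rewrite [[set w; a]]setUC.
Qed.

Section MinimalColouring.
Variable c : {set T} -> 'I_k.
Hypothesis c_min : minimal c.
Variables (a b : T) (j : 'I_k).
Hypotheses (iso_ab : [set a; b] \in isolated_edges c) (ji : j != c [set a; b]).

Lemma fork_or w : nb c j a w -> fork c j a w \/ fork c j w a.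
Proof.
move=> aw; have [fc min_c] := c_min.
have [|no_aw] := classic (fork c j a w); first by left.
have [|no_wa] := classic (fork c j w a); first by right.
have := card_isolated_recolor_fork iso_ab ji aw no_aw no_wa.
by rewrite ltnNge min_c //; apply: forest_recolor_isolated.
Qed.

Lemma fork_leaf w : fork c j a w -> forall x, nb c j w x -> x = a.
Proof.
case=> z zw [[az z_leaf] nb_a].
have [[z' z'z [[az' z'_leaf] _]]|[y ya [[zy _] _]]] := fork_or az.
  by case: (nb_a _ az') => [<- // | z'E]; rewrite z'E eqxx in z'z.
by rewrite (z_leaf _ zy) eqxx in ya.
Qed.

Lemma path_end_pendant w p t : path (nb c j) a [:: w, p & t] ->
  uniq [:: a, w, p & t] -> last p t = b ->
  pendant c j w b /\ forall x, nb c j w x -> x = a \/ x = b.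
Proof.
case/and3P=> aw wp pt /and3P[a_wpt w_pt _] lt.
have pa : p != a by apply: contraNneq a_wpt => <-; rewrite !inE eqxx orbT.
have [fork_aw|[z za [[wz z_leaf] nb_w]]] := fork_or aw.
  by rewrite (fork_leaf fork_aw wp) eqxx in pa.
have pz : p = z by case: (nb_w _ wp) => // pa'; rewrite pa' eqxx in pa.
subst z; case: t pt w_pt a_wpt lt => [_ _ _ <- | q t /andP[pq _] w_pqt _ _]; first by split.
by rewrite (z_leaf _ pq) !inE eqxx orbT in w_pqt.
Qed.

End MinimalColouring.

Lemma isolated_cherry c a b j : minimal c -> [set a; b] \in isolated_edges c ->
  j != c [set a; b] -> (exists2 x, x \in [set a; b] & exists y, nb c j x y) ->
  exists w, cherry c j w a b.
Proof.
move=> c_min iso_ab ji [x xab [y /andP[exy /eqP cxy]]]; have [fc min_c] := c_min.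
set c1 := recolor c [set a; b] j.
have lt_c1 : #|isolated_edges c1| < #|isolated_edges c|.
  apply: card_isolated_recolor => //; exists [set x; y]; rewrite ?mem_edges //.
  by split => //; rewrite meets_set2 xab.
have cyclic_c1 : ~ acyclic (nb c1 j).
  move=> acyc; move: lt_c1; rewrite ltnNge min_c // => l.
  have [->//|lj] := eqVneq l j; exact: sub_acyclic (recolor_sub lj) (fc l).
have c1_sub x' y' : nb c1 j x' y' -> nb c j x' y' || ([set x'; y'] == [set a; b]).
  by rewrite /nb /c1 /recolor; case: ifP => _; rewrite ?orbT ?orbF.
have [w [p [t [uniq_abt path_abt last_t]]]] :=
  acyclic_add_edge c1_sub (nbC c1 j) (fc j) cyclic_c1.
have [[wb b_leaf] nb_w] := path_end_pendant c_min iso_ab ji path_abt uniq_abt last_t.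
have aw : nb c j a w by case/andP: path_abt.
have ba : b != a by rewrite eq_sym; case/isolatedP: iso_ab; rewrite mem_edges => /e_neq.
have path_bwa : path (nb c j) b [:: w; a] by rewrite /= nbC wb nbC aw.
have uniq_bwa : uniq [:: b; w; a].
  by rewrite /= !inE negb_or ba [b == w]eq_sym (nb_neq wb) [w == a]eq_sym (nb_neq aw).
have iso_ba : [set b; a] \in isolated_edges c by rewrite setUC.
have ji' : j != c [set b; a] by rewrite setUC.
have [[_ a_leaf] _] := path_end_pendant c_min iso_ba ji' path_bwa uniq_bwa erefl.
by exists w; split => //; split; rewrite 1?nbC.
Qed.

Definition swap c u v w :=
  recolor (recolor c [set u; v] (c [set u; w])) [set u; w] (c [set u; v]).

Section Swap.
Variables (c : {set T} -> 'I_k) (u v w : T) (j : 'I_k).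
Hypotheses (iso_uv : [set u; v] \in isolated_edges c) (ch : cherry c j w u v).

Let i := c [set u; v].
Let c' := swap c u v w.

Let euv : e u v. Proof. by case/isolatedP: iso_uv; rewrite mem_edges. Qed.
Let wu : nb c j w u. Proof. by case: ch => -[]. Qed.
Let wv : nb c j w v. Proof. by case: ch => _ []. Qed.
Let u_leaf x : nb c j u x -> x = w. Proof. by case: ch => -[_ leaf] _ _; apply: leaf. Qed.
Let nb_w x : nb c j w x -> x = u \/ x = v. Proof. by case: ch => _ _ nb_w; apply: nb_w. Qed.

Let neq_uv : u != v. Proof. exact: e_neq euv. Qed.
Let neq_wu : w != u. Proof. exact: nb_neq wu. Qed.
Let neq_wv : w != v. Proof. exact: nb_neq wv. Qed.

Let cuw : c [set u; w] = j. Proof. by case/andP: wu; rewrite setUC => _ /eqP. Qed.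
Let ji : j != i.
Proof.
by apply: contraNneq neq_wv => ji; apply/eqP/(isolated_nb iso_uv); rewrite -/i -ji nbC.
Qed.
Let uv_uw : [set u; v] != [set u; w].
Proof. by rewrite eq_set2l eq_sym ?neq_wv // eq_sym. Qed.

Let swap_uw : c' [set u; w] = i. Proof. by rewrite /c' /swap /recolor eqxx. Qed.
Let swap_uv : c' [set u; v] = j.
Proof. by rewrite /c' /swap /recolor (negbTE uv_uw) eqxx. Qed.
Let swap_other f : f != [set u; v] -> f != [set u; w] -> c' f = c f.
Proof. by move=> fuv fuw; rewrite /c' /swap /recolor (negbTE fuv) (negbTE fuw). Qed.
Let nb_swap_off l x y : x != u -> y != u -> nb c' l x y = nb c l x y.
Proof. by move=> xu yu; rewrite /c' /swap !nb_recolor_off. Qed.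

Let swap_nb_i x : nb c' i u x -> x = w.
Proof.
have [//|xw] := eqVneq x w; have [->|xv] := eqVneq x v.
  by rewrite /nb swap_uv (negbTE ji) andbF.
case/andP=> eux; have xu : x != u by rewrite eq_sym (e_neq eux).
rewrite swap_other ?eq_set2l // => cux.
by rewrite (isolated_nb iso_uv (_ : nb c i u x)) ?eqxx // /nb eux in xv *.
Qed.

Let swap_nb_j x : nb c' j u x -> x = v.
Proof.
have [->|xw] := eqVneq x w.
  by rewrite /nb swap_uw eq_sym (negbTE ji) andbF.
have [//|xv] := eqVneq x v.
case/andP=> eux; have xu : x != u by rewrite eq_sym (e_neq eux).
rewrite swap_other ?eq_set2l // => cux.
by rewrite (u_leaf (_ : nb c j u x)) ?eqxx // /nb eux in xw *.
Qed.

Lemma forest_swap : forest c -> forest (swap c u v w).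
Proof.
move=> fc l; rewrite -/c'.
have off l' x y : x != u -> y != u -> nb c' l' x y -> nb c l' x y.
  by move=> xu yu; rewrite nb_swap_off.
have [->|li] := eqVneq l i.
  apply: (acyclic_off (fc i) (off i)) => s; apply: (notin_cycle (nbC c' i)).
  by move=> x y /swap_nb_i-> /swap_nb_i->.
have [->|lj] := eqVneq l j.
  apply: (acyclic_off (fc j) (off j)) => s; apply: (notin_cycle (nbC c' j)).
  by move=> x y /swap_nb_j-> /swap_nb_j->.
apply: sub_acyclic (fc l) => x y /(recolor_sub li); apply: recolor_sub.
by rewrite cuw.
Qed.

Lemma isolated_swap_sub :
  isolated_edges (swap c u v w) :\ [set u; w] \subset isolated_edges c :\ [set u; v].
Proof.
rewrite -/c'; apply/subsetP => h; rewrite !in_setD1 => /andP[h_uw /isolatedP[hE iso_h]].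
have /isolatedP[uvE iso_uvc] := iso_uv.
have vw_uv : [set v; w] != [set u; v].
  by rewrite eq_set2 [v == u]eq_sym (negbTE neq_uv) (negbTE neq_wu) andbF.
have vw_uw : [set v; w] != [set u; w].
  by rewrite eq_set2 [v == u]eq_sym (negbTE neq_uv) (negbTE neq_wu) !andbF.
have c'vw : c' [set v; w] = j.
  by rewrite swap_other // setUC; case/andP: wv => _ /eqP.
have h_uv : h != [set u; v].
  apply: contraNneq vw_uv => huv; subst h; apply/eqP/iso_h.
  - by rewrite mem_edges e_sym; case/andP: wv.
  - by rewrite c'vw swap_uv.
  - by rewrite meets_set2 set22.
rewrite h_uv; apply/isolatedP; split => // g gE cg mg.
have c'h := swap_other h_uv h_uw.
have [guv|g_uv] := eqVneq g [set u; v].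
  by subst g; case/eqP: h_uv; apply: iso_uvc hE (esym cg) _; rewrite disjoint_sym.
have [guw|g_uw] := eqVneq g [set u; w]; last first.
  by apply: iso_h gE _ mg; rewrite c'h swap_other.
exfalso; subst g; rewrite disjoint_sym cuw in mg cg.
have [x /set2P[]-> [z exz hxz]] := edge_meets hE mg; subst h.
  have uz : nb c j u z by rewrite /nb exz -cg eqxx.
  by rewrite (u_leaf uz) eqxx in h_uw.
have wz : nb c j w z by rewrite /nb exz -cg eqxx.
have [zu|zv] := nb_w wz; first by rewrite zu setUC eqxx in h_uw.
subst z.
have : [set u; v] = [set w; v].
  apply: iso_h uvE _ _; first by rewrite swap_uv c'h -cg.
  by rewrite meets_set2 set22 orbT.
by move/eqP; rewrite eq_sym [[set w; v]]setUC (negbTE vw_uv).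
Qed.

Lemma isolated_swap_uw :
  [set u; w] \in isolated_edges (swap c u v w) <-> forall y, ~~ nb c i w y.
Proof.
rewrite -/c'.
have off_w y : y != u -> [set w; y] != [set u; v] /\ [set w; y] != [set u; w].
  by move=> yu; rewrite !eq_set2 (negbTE neq_wu) (negbTE neq_wv) (negbTE yu) !andbF.
split.
  case/isolatedP=> _ iso_uw y; apply/negP => /andP[ewy /eqP cwy].
  have yu : y != u.
    apply: contraNneq neq_wv => yu; subst y; apply/eqP/(isolated_nb iso_uv).
    by rewrite nbC /nb ewy cwy /i eqxx.
  have [wy_uv wy_uw] := off_w y yu.
  have : [set w; y] = [set u; w].
    apply: iso_uw; first by rewrite mem_edges.
      by rewrite swap_uw swap_other // cwy.
    by rewrite meets_set2 set22.
  by move/eqP; rewrite (negbTE wy_uw).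
move=> w_free; apply/isolatedP; split; first by rewrite mem_edges e_sym; case/andP: wu.
move=> g gE cg mg; rewrite swap_uw in cg.
have [x /set2P[]-> [z exz gxz]] := edge_meets gE mg; subst g.
  have uz : nb c' i u z by rewrite /nb exz cg eqxx.
  by rewrite (swap_nb_i uz).
have [->|zu] := eqVneq z u; first exact: setUC.
have [wz_uv wz_uw] := off_w z zu.
by move: (w_free z); rewrite /nb exz -cg swap_other // eqxx.
Qed.

End Swap.

Lemma cherry_centre_free c u v w j : minimal c -> [set u; v] \in isolated_edges c ->
  cherry c j w u v -> forall y, ~~ nb c (c [set u; v]) w y.
Proof.
move=> [fc min_c] iso_uv ch; apply/(isolated_swap_uw iso_uv ch); apply: contraT => not_iso.
have := min_c _ (forest_swap iso_uv ch fc); apply: contraLR => _; rewrite -ltnNge.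
apply/proper_card/(sub_proper_trans _ (properD1 iso_uv)).
apply: subset_trans (isolated_swap_sub iso_uv ch).
by rewrite subsetD1 subxx.
Qed.

Lemma minimal_swap c u v w j : minimal c -> [set u; v] \in isolated_edges c ->
  cherry c j w u v ->
  minimal (swap c u v w) /\ [set u; w] \in isolated_edges (swap c u v w).
Proof.
move=> c_min iso_uv ch; have [fc min_c] := c_min.
split; last by apply/(isolated_swap_uw iso_uv ch); apply: cherry_centre_free c_min iso_uv ch.
split; first exact: forest_swap iso_uv ch fc.
move=> c'' fc''; apply: leq_trans (min_c _ fc'').
exact: card_le_setD1 (isolated_swap_sub iso_uv ch) iso_uv.
Qed.

Lemma cherry_third_colour c u v w j l x y : minimal c ->
  [set u; v] \in isolated_edges c -> cherry c j w u v ->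
  l != c [set u; v] -> l != j -> x \in [set u; v; w] -> ~~ nb c l x y.
Proof.
move=> c_min iso_uv ch li lj xuvw.
have [c'_min iso_uw] := minimal_swap c_min iso_uv ch.
set c' := swap c u v w in c'_min iso_uw.
have [[/[dup] /nb_neq neq_wu /andP[_ /eqP cwu] _] [/nb_neq neq_wv _] _] := ch.
have cuw : c [set u; w] = j by rewrite setUC.
have nb_c' x' y' : nb c' l x' y' = nb c l x' y'.
  rewrite /nb /c' /swap /recolor; case: ifP => [/eqP-> | _]; last case: ifP => [/eqP-> | _] //.
    by rewrite cuw eq_sym (negbTE li) [j == l]eq_sym (negbTE lj).
  by rewrite cuw [j == l]eq_sym (negbTE lj) eq_sym (negbTE li).
have li' : l != c' [set u; w] by rewrite /c' /swap /recolor eqxx.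
have no_uv x' y' : x' \in [set u; v] -> ~~ nb c l x' y'.
  move=> x'uv; apply/negP => x'y'.
  have [w1 [[w1u u_leaf1] _ nb_w1]] :=
    isolated_cherry c_min iso_uv li (ex_intro2 _ _ x' x'uv (ex_intro _ y' x'y')).
  have uw1 : nb c' l u w1 by rewrite nb_c' nbC.
  have [w2 [[_ u_leaf2] [w2w _] _]] :=
    isolated_cherry c'_min iso_uw li' (ex_intro2 _ _ u (set21 u w) (ex_intro _ w1 uw1)).
  have w12 : w1 = w2 by apply: u_leaf2.
  have w1w : nb c l w1 w by rewrite -nb_c' w12.
  by case: (nb_w1 _ w1w) => wE; [move: neq_wu | move: neq_wv]; rewrite wE eqxx.
apply/negP => xy; move: xuvw; rewrite !inE => /orP[/orP[]|] /eqP xE; subst x.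
- by move/negP: (no_uv u y (set21 u v)).
- by move/negP: (no_uv v y (set22 u v)).
have wy : nb c' l w y by rewrite nb_c'.
have [w2 [[w2u _] _ _]] :=
  isolated_cherry c'_min iso_uw li' (ex_intro2 _ _ w (set22 u w) (ex_intro _ y wy)).
by move/negP: (no_uv u w2 (set21 u v)); rewrite -nb_c' nbC.
Qed.

Lemma isolated_edge_triangle c u v t : minimal c -> [set u; v] \in isolated_edges c ->
  e u t -> t != v -> has_isolated_triangle e.
Proof.
move=> c_min iso_uv eut tv.
set i := c [set u; v]; set j := c [set u; t].
have ut : nb c j u t by rewrite /nb eut eqxx.
have ji : j != i.
  by apply: contraNneq tv => ji; apply/eqP/(isolated_nb iso_uv); rewrite -/i -ji.
have [w ch] := isolated_cherry c_min iso_uv ji (ex_intro2 _ _ u (set21 u v) (ex_intro _ t ut)).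
have w_free := cherry_centre_free c_min iso_uv ch.
have [[/andP[ewu _] u_leaf] [/andP[ewv _] v_leaf] nb_w] := ch.
have euv : e u v by case/isolatedP: iso_uv; rewrite mem_edges.
exists u, v, w; split; [done | by rewrite e_sym | by rewrite e_sym | move=> x y exy xuvw].
set l := c [set x; y]; have xy : nb c l x y by rewrite /nb exy eqxx.
have [li|li] := eqVneq l i.
  rewrite li in xy; move: xuvw; rewrite !inE => /orP[/orP[]|] /eqP xE; subst x.
  - by rewrite (isolated_nb iso_uv xy) eqxx orbT.
  - by rewrite (isolated_nbr iso_uv xy) eqxx.
  - by rewrite (negbTE (w_free y)) in xy.
have [lj|lj] := eqVneq l j.
  rewrite lj in xy; rewrite !inE; move: xuvw; rewrite !inE => /orP[/orP[]|] /eqP xE; subst x.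
  - by rewrite (u_leaf _ xy) eqxx !orbT.
  - by rewrite (v_leaf _ xy) eqxx !orbT.
  - by case: (nb_w _ xy) => ->; rewrite eqxx ?orbT.
by rewrite (negbTE (cherry_third_colour y c_min iso_uv ch li lj xuvw)) in xy.
Qed.

Lemma minimal_isolated_free c : ~ has_isolated_edge e -> ~ has_isolated_triangle e ->
  minimal c -> isolated_edges c = set0.
Proof.
move=> no_K2 no_K3 c_min; apply/setP => f; rewrite in_set0; apply/negP => iso_f.
have [u [v [euv fE]]] := edgesP (fst (isolatedP _ _ iso_f)).
subst f.
have [/existsP[t /andP[eut tv]] | /existsPn u_only] := boolP [exists t, e u t && (t != v)].
  exact: no_K3 (isolated_edge_triangle c_min iso_f eut tv).
have [/existsP[t /andP[evt tu]] | /existsPn v_only] := boolP [exists t, e v t && (t != u)].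
  by apply: no_K3 (isolated_edge_triangle c_min _ evt tu); rewrite setUC.
apply: no_K2; exists u, v; split => // z ez.
  by apply/eqP; move: (u_only z); rewrite ez negbK.
by apply/eqP; move: (v_only z); rewrite ez negbK.
Qed.

Lemma no_isolated_edges_class c i : isolated_edges c = set0 ->
  no_isolated_edges [set f in edges e | c f == i].
Proof.
move=> no_iso f [fF iso_f]; move: (fF); rewrite inE => /andP[fE /eqP cf].
suff : f \in isolated_edges c by rewrite no_iso inE.
apply/isolatedP; split => // g gE cg; apply: contraNeq => gf.
by apply: iso_f => //; rewrite inE gE cg cf eqxx.
Qed.

End Colourings.

Theorem lemma1 (T : finType) (e : rel T) (k : nat) :
  symmetric e -> irreflexive e ->
  ~ has_isolated_edge e -> ~ has_isolated_triangle e ->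
  is_arboricity e k ->
  exists c : {set T} -> 'I_k,
    forall i : 'I_k,
      is_forest [set f in edges e | c f == i] /\
      no_isolated_edges [set f in edges e | c f == i].
Proof.
move=> e_sym e_irr no_K2 no_K3 [[c0 c0_forest] _].
have [c c_min] : exists c : {set T} -> 'I_k, minimal e c.
  apply: (exists_minimizer (fun c : {set T} -> 'I_k => #|isolated_edges e c|)).
  by exists c0 => i; apply/(is_forest_class e_sym).
have no_iso := minimal_isolated_free e_sym e_irr no_K2 no_K3 c_min.
exists c => i; split; first exact/(is_forest_class e_sym)/(c_min.1).
exact: no_isolated_edges_class.
Qed.
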